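(* Let $C$ be a finite set of base cues and let $c_1,\ldots,c_m \subseteq C$ be the public cue sets of accounts $A_1,\ldots,A_m$, with $C=\bigcup_{j=1}^m c_j$. For each account $A_j$ let its visitation schedule $\tau_0^j<\tau_1^j<\cdots$ be the arrival times of a Poisson process of rate $\lambda_j\ge 0$, these processes being independent. For each $\hat c\in C$ let $t_0^{\hat c}<t_1^{\hat c}<\cdots$ be its rehearsal schedule. For $t>0$ let $X_t=\sum_{\hat c\in C} X_{t,\hat c}$, where \[X_{t,\hat c}=\left|\left\{ i ~:~ t_{i+1}^{\hat c}\le t \ \wedge\ \forall j,k:\ \left(\hat c\notin c_j \ \vee\ \tau_k^j\notin [t_i^{\hat c},t_{i+1}^{\hat c})\right)\right\}\right|.\] For each $\hat c\in C$ let $i^*_{\hat c}=\left(\arg\max_x \{x : t_x^{\hat c}<t\}\right)-1$. Then \[\mathbb{E}[X_t]=\sum_{\hat c\in C}\ \sum_{i=0}^{i^*_{\hat c}} \exp\!\left(-\Big(\sum_{j:\,\hat c\in c_j}\lambda_j\Big)\big(t_{i+1}^{\hat c}-t_i^{\hat c}\big)\right).\]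
   Context: A rehearsal schedule for a cue $\hat c$ is an increasing sequence of times $t_0^{\hat c}<t_1^{\hat c}<\cdots$; for each $i\ge 0$ there is a rehearsal requirement that the cue be rehearsed at least once in $[t_i^{\hat c},t_{i+1}^{\hat c})$. The requirement is naturally satisfied if some account $A_j$ with $\hat c\in c_j$ is visited during that window; $X_{t,\hat c}$ counts the requirements with window ending by time $t$ that are not naturally satisfied (the extra rehearsals for $\hat c$), and $X_t$ is the total number of extra rehearsals. *)

From HB Require Import structures.
From mathcomp Require Import all_boot all_order all_algebra.
From mathcomp Require Import all_classical all_reals all_analysis measurable_realfun.
Set Implicit Arguments. Unset Strict Implicit. Unset Printing Implicit Defensive.
Import Order.TTheory GRing.Theory Num.Theory.
Local Open Scope classical_set_scope.
Local Open Scope ring_scope.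

Definition npts {R : realType} (A : set R) (a b : R) : \bar R :=
  (\esum_(x in A `&` `[a, b[) 1)%E.

(* S j w is the set of arrival times {tau_0^j, tau_1^j, ...} of account j in
   outcome w.  [indep_poisson_processes P lam S]: the S j are independent
   (homogeneous) Poisson processes on [0, +oo) of rates lam j, characterized by
   their finite-dimensional distributions: for any finite family of windows
   [a_l, b_l) (pairwise disjoint when they belong to the same process), the
   counts are jointly distributed as independent Poisson(lam (J l) * (b_l - a_l))
   variables. *)
Definition indep_poisson_processes d (T : measurableType d) (R : realType)
  (P : probability T R) (m : nat) (lam : 'I_m -> R) (S : 'I_m -> T -> set R)
  : Prop :=
  [/\ (forall j w, S j w `<=` [set x | 0 <= x]),
      (forall j a b, measurable_fun [set: T] (fun w : T => (npts (S j w) a b : \bar R))) &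
      (forall (n : nat) (J : 'I_n -> 'I_m) (a b : 'I_n -> R) (k : 'I_n -> nat),
          (forall l, 0 <= a l <= b l) ->
          (forall l l', l != l' -> J l = J l' -> b l <= a l' \/ b l' <= a l) ->
          P (\bigcap_(l in [set: 'I_n])
               [set w | npts (S (J l) w) (a l) (b l) = ((k l)%:R)%:E])
          = (\prod_(l < n) poisson_prob (lam (J l) * (b l - a l)) (k l) [set k l])%E)].

Definition extra_rehearsals {R : realType} (T : Type) (C : finType) (m : nat)
  (cs : 'I_m -> {set C}) (S : 'I_m -> T -> set R) (s : nat -> R) (chat : C)
  (t : R) (w : T) : \bar R :=
  let A := [set i : nat | s i.+1 <= t /\
        (forall (j : 'I_m) (x : R), S j w x ->
            chat \notin cs j \/ ~ (s i <= x < s i.+1))] in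
  (\esum_(i in A) 1)%E.

(* [istar_succ s t n]: n = i*+1 = argmax_x {x : s x < t}; when that set is
   empty, i* is taken so that the sum over 0 <= i <= i* is empty (n = 0). *)
Definition istar_succ {R : realType} (s : nat -> R) (t : R) (n : nat) : Prop :=
  (s n < t /\ forall x, s x < t -> (x <= n)%N) \/
  ((forall x, t <= s x) /\ n = 0%N).

(* The number of extra rehearsals of a cue c is the sum, over the windows
   [t_i, t_{i+1}) of c that end before t, of the indicator that none of the
   accounts whose cue set contains c is visited in that window.  By linearity of
   expectation it suffices to compute the probability of each such event: the
   window counts of independent Poisson processes of rates lam_j are independent
   Poisson(lam_j (t_{i+1} - t_i)) variables, so all of them vanish with
   probability exp(-(sum_j lam_j) (t_{i+1} - t_i)). *)
From HB Require Import structures.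
From mathcomp Require Import all_boot all_order all_algebra.
From mathcomp Require Import all_classical all_reals all_analysis measurable_realfun.
Import Order.TTheory GRing.Theory Num.Theory.
Local Open Scope classical_set_scope.
Local Open Scope ring_scope.

Lemma npts_eq0P {R : realType} (A : set R) (a b : R) :
  npts A a b = 0%E <-> (forall x, A x -> ~ (a <= x < b)).
Proof.
split=> [npts0 x Ax abx|noA]; last first.
  rewrite /npts esum1 // => x [Ax]; rewrite /= in_itv /= => abx.
  by case: (noA x Ax abx).
have : (1 <= npts A a b)%E.
  rewrite /npts; apply: esum_ge; exists [set x]; last by rewrite fsbig_set1.
  split; first exact: finite_set1.
  by move=> y ->; split => //=; rewrite in_itv /= abx.
by rewrite npts0 lee_fin ler10.
Qed.

Lemma poisson_prob0 (R : realType) (r : R) (k : nat) : 0 <= r ->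
  poisson_prob r k [set 0%N] = (expR (- r))%:E.
Proof.
move=> r_ge0; rewrite /poisson_prob; case: ifPn => [r_gt0|].
  rewrite esum_set1 ?lee_fin ?poisson_pmf_ge0 // /poisson_pmf r_gt0.
  by rewrite expr0 mul1r fact0 invr1 mul1r.
rewrite -leNgt => r_le0.
have -> : r = 0 by apply/le_anti/andP.
by rewrite diracE mem_set // oppr0 expR0.
Qed.

Lemma istar_succ_ltP {R : realType} (s : nat -> R) (t : R) (n : nat) :
  (forall i, s i < s i.+1) -> (forall i, s i <> t) -> istar_succ s t n ->
  forall i, s i.+1 <= t <-> (i < n)%N.
Proof.
move=> s_incr s_neq_t [[s_lt_t n_max]|[t_le_s ->]] i; last first.
  split=> // s_le_t; exfalso.
  by apply: (s_neq_t i.+1); apply/le_anti; rewrite s_le_t t_le_s.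
split=> [s_le_t|]; first by apply: n_max; rewrite lt_neqAle s_le_t andbT; apply/eqP.
move=> i_lt_n; rewrite (le_trans _ (ltW s_lt_t)) //.
by move: i_lt_n; rewrite leq_eqVlt => /orP[/eqP -> //|/(homo_ltn (@lt_trans _ _) s_incr)/ltW].
Qed.

Lemma esum1_ord {R : realType} (n : nat) (A : set nat) : A `<=` `I_n ->
  (\esum_(i in A) 1 = \sum_(i < n) (\1_A i)%:E :> \bar R)%E.
Proof.
move=> A_sub; rewrite esum_mkcond.
rewrite (_ : esum _ _ = \esum_(i in `I_n) (\1_A i)%:E)%E.
  by rewrite esum_fset ?finite_II -?fsbig_ord.
rewrite [RHS]esum_mkcond; apply: eq_esum => i _; rewrite indicE.
have [iA|iNA] := boolP (i \in A); last by case: (i \in `I_n).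
by rewrite (mem_set (A_sub _ (set_mem iA))).
Qed.

Definition no_arrivals {R : realType} {T : Type} {m : nat}
  (S : 'I_m -> T -> set R) (J : pred 'I_m) (a b : R) : set T :=
  [set w | forall j, J j -> npts (S j w) a b = 0%E].

Lemma extra_rehearsals_sum_indic {R : realType} (T : Type) (C : finType)
  (m : nat) (cs : 'I_m -> {set C}) (S : 'I_m -> T -> set R) (s : nat -> R)
  (c : C) (t : R) (n : nat) (w : T) :
  (forall i, s i.+1 <= t <-> (i < n)%N) ->
  extra_rehearsals cs S s c t w
  = (\sum_(i < n) (\1_(no_arrivals S (fun j => c \in cs j) (s i) (s i.+1)) w)%:E)%E.
Proof.
move=> ends_by_t; rewrite /extra_rehearsals; set A := [set i | _].
pose E i := no_arrivals S (fun j => c \in cs j) (s i) (s i.+1).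
have A_E i : A i <-> (i < n)%N /\ E i w.
  rewrite /A /E /no_arrivals /= ends_by_t.
  split=> -[i_lt unvisited]; split=> // j.
    by move=> cj; apply/npts_eq0P => x /(unvisited j)[/negP/(_ cj)|].
  move=> x Sx; have [cj|] := boolP (c \in cs j); last by left.
  by right; move/npts_eq0P: (unvisited j cj); apply.
rewrite (@esum1_ord _ n) => [|i /A_E[]//]; apply: eq_bigr => i _.
rewrite !indicE; congr (_%:R%:E).
have [iA|iNA] := boolP ((i : nat) \in A).
  by rewrite mem_set //; have [] := (A_E i).1 (set_mem iA).
by rewrite memNset // => Ei; move/negP: iNA; apply; apply/mem_set/A_E.
Qed.

Section PoissonNoArrivals.
Context {d} {T : measurableType d} {R : realType} {P : probability T R}.
Context {m : nat} {lam : 'I_m -> R} {S : 'I_m -> T -> set R}.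

Lemma measurable_no_arrivals (J : pred 'I_m) (a b : R) :
  (forall j, measurable_fun [set: T] (fun w => npts (S j w) a b)) ->
  measurable (no_arrivals S J a b).
Proof.
move=> mS; have -> : no_arrivals S J a b
    = \bigcap_(j in [set j | J j]) ((fun w => npts (S j w) a b) @^-1` [set 0%E]).
  by apply/seteqP; split => w /= noS j /noS.
apply: fin_bigcap_measurable => [|j _]; first exact: finite_finset.
by rewrite -[X in measurable X]setTI; apply: mS.
Qed.

Hypotheses (lam_ge0 : forall j, 0 <= lam j)
  (S_poisson : indep_poisson_processes P lam S).

(* Apply the joint law to the processes of J, enumerated as 'I_#|J|, all on
   the window [a, b); disjointness is vacuous as the enumeration is injective. *)
Lemma prob_no_arrivals (J : pred 'I_m) (a b : R) : 0 <= a <= b ->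
  P (no_arrivals S J a b) = (expR (- (\sum_(j | J j) lam j) * (b - a)))%:E.
Proof.
move=> /andP[a_ge0 a_le_b]; have [_ _ joint_law] := S_poisson.
have distinct_windows (l l' : 'I_#|J|) : l != l' -> enum_val l = enum_val l' ->
    b <= a \/ b <= a.
  by move=> neq_ll' /enum_val_inj eq_ll'; rewrite eq_ll' eqxx in neq_ll'.
have window_ok (l : 'I_#|J|) : 0 <= a <= b by rewrite a_ge0 a_le_b.
have := joint_law #|J| (fun l => enum_val l) (fun=> a) (fun=> b) (fun=> 0%N)
  window_ok distinct_windows.
have -> : \bigcap_(l in [set: 'I_#|J|])
    [set w | npts (S (enum_val l) w) a b = (0%:R)%:E] = no_arrivals S J a b.
  apply/seteqP; split => w /= noS.
    by move=> j Jj; have := noS (enum_rank_in Jj j) I; rewrite enum_rankK_in.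
  by move=> l _; apply/noS/enum_valP.
move=> ->; under eq_bigr => l _ do
  rewrite poisson_prob0 ?mulr_ge0 ?subr_ge0 ?lam_ge0 //.
by rewrite prodEFin -expR_sum sumrN mulNr -mulr_suml -big_enum_val.
Qed.

End PoissonNoArrivals.

Theorem theorem1 (d : measure_display) (T : measurableType d) (R : realType)
  (P : probability T R) (C : finType) (m : nat) (cs : 'I_m -> {set C})
  (Hcover : forall x : C, exists j : 'I_m, x \in cs j)
  (lam : 'I_m -> R) (Hlam : forall j, 0 <= lam j)
  (S : 'I_m -> T -> set R) (HS : indep_poisson_processes P lam S)
  (sched : C -> nat -> R) (Hinc : forall c i, sched c i < sched c i.+1)
  (H0 : forall c, 0 <= sched c 0%N)
  (t : R) (Ht : 0 < t) (Hnt : forall c x, sched c x <> t)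
  (K : C -> nat) (HK : forall c, istar_succ (sched c) t (K c)) :
  (\int[P]_w (\sum_(c : C) extra_rehearsals cs S (sched c) c t w))%E
  = (\sum_(c : C) \sum_(i < K c)
       expR (- (\sum_(j : 'I_m | c \in cs j) lam j)
               * (sched c i.+1 - sched c i)))%:E.
Proof.
have [_ mS _] := HS.
pose E c i := no_arrivals S (fun j => c \in cs j) (sched c i) (sched c i.+1).
have mE c i : measurable (E c i) by exact: measurable_no_arrivals.
have sched_ge0 c i : 0 <= sched c i.
  case: i => [|i]; first exact: H0.
  exact/(le_trans (H0 c))/ltW/(homo_ltn (@lt_trans _ _) (Hinc c)).
have PE c i : P (E c i) = (expR (- (\sum_(j : 'I_m | c \in cs j) lam j)
    * (sched c i.+1 - sched c i)))%:E.
  by rewrite (prob_no_arrivals Hlam HS) // sched_ge0 ltW.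
transitivity (\int[P]_w (\sum_(c : C) \sum_(i < K c) (\1_(E c i) w)%:E))%E.
  apply: eq_integral => w _; apply: eq_bigr => c _.
  exact/extra_rehearsals_sum_indic/istar_succ_ltP.
have mI c i : measurable_fun [set: T] (fun w => (\1_(E c i) w)%:E : \bar R).
  by apply/measurable_EFinP; exact: measurable_indic.
have I_ge0 c i w : (0 <= (\1_(E c i) w)%:E :> \bar R)%E.
  by rewrite indicE lee_fin ler0n.
rewrite ge0_integral_sum //; last first.
- by move=> c w _; apply: sume_ge0.
- by move=> c; apply: emeasurable_sum.
rewrite -sumEFin; apply: eq_bigr => c _; rewrite -sumEFin ge0_integral_sum //.
apply: eq_bigr => i _; rewrite integral_indic // setIT.
exact: PE.
Qed.
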